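(* Let $n$ be a power of $2$ and $Q=\{0,1,2,4,\dots,n/2\}\subseteq[n]$. Let $\hat x\in\mathbb{C}^n$ and define $x_q=\frac1{\sqrt n}\sum_{f'\in[n]}\hat x_{f'}e^{2\pi\sqrt{-1}\,qf'/n}$ for $q\in[n]$. Suppose there is $f\in[n]$ with $\hat x_f\ne0$ and $|\hat x_f|\ge3\,\|\hat x_{[n]\setminus\{f\}}\|_1$. Then $f$ is uniquely determined by the samples $(x_q)_{q\in Q}$, and it can be computed from them using $O(\log n)$ arithmetic operations.
   Context: $[n]=\{0,\dots,n-1\}$; $\hat x_{[n]\setminus\{f\}}$ is $\hat x$ with its $f$-th coordinate set to zero; $\|\cdot\|_1$ is the $\ell_1$ norm. *)

(* classical reals, complex numbers as pairs (re, im) of reals. *)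
From Stdlib Require Import Reals List Arith.
Import ListNotations.
Open Scope R_scope.

Fixpoint rsum (n : nat) (g : nat -> R) : R :=
  match n with
  | O => 0
  | S m => rsum m g + g m
  end.

Definition cmod (a b : R) : R := sqrt (a ^ 2 + b ^ 2).

(* A vector xhat in C^n is given by its real parts xr and imaginary parts xi
   (only indices < n matter).  Phase angle 2 pi q f' / n. *)
Definition phase (n q f' : nat) : R := 2 * PI * INR (q * f') / INR n.

Definition samp_re (n : nat) (xr xi : nat -> R) (q : nat) : R :=
  / sqrt (INR n) *
  rsum n (fun f' => xr f' * cos (phase n q f') - xi f' * sin (phase n q f')).
Definition samp_im (n : nat) (xr xi : nat -> R) (q : nat) : R :=
  / sqrt (INR n) *
  rsum n (fun f' => xr f' * sin (phase n q f') + xi f' * cos (phase n q f')).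

Definition Qlist (k : nat) : list nat := 0%nat :: map (fun j => Nat.pow 2 j) (seq 0 k).

(* the samples (x_q)_{q in Q}, flattened as [Re x_q; Im x_q] in the order of Qlist *)
Definition samples (k : nat) (xr xi : nat -> R) : list R :=
  flat_map (fun q => [samp_re (Nat.pow 2 k) xr xi q; samp_im (Nat.pow 2 k) xr xi q])
           (Qlist k).

Definition heavy (n : nat) (xr xi : nat -> R) (f : nat) : Prop :=
  (f < n)%nat /\ (xr f <> 0 \/ xi f <> 0) /\
  cmod (xr f) (xi f) >= 3 * rsum n (fun f' => if Nat.eqb f' f then 0 else cmod (xr f') (xi f')).

(* Model of computation: algebraic decision trees over the reals (real RAM).
   Registers hold reals, initially the input list.  Each internal node is one
   arithmetic operation / constant load (result appended as a new register) or
   one comparison (branching). *)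
Inductive binop : Type := OAdd | OSub | OMul | ODiv.

Definition apply_binop (o : binop) (a b : R) : R :=
  match o with
  | OAdd => a + b
  | OSub => a - b
  | OMul => a * b
  | ODiv => a / b
  end.

Inductive dtree : Type :=
| Leaf : nat -> dtree
| Cst : R -> dtree -> dtree
| Bin : binop -> nat -> nat -> dtree -> dtree
| Cmp : nat -> nat -> dtree -> dtree -> dtree.

Fixpoint run (t : dtree) (regs : list R) : nat :=
  match t with
  | Leaf f => f
  | Cst c t' => run t' (regs ++ [c])
  | Bin o i j t' => run t' (regs ++ [apply_binop o (nth i regs 0) (nth j regs 0)])
  | Cmp i j t1 t2 =>
      if Rle_dec (nth i regs 0) (nth j regs 0) then run t1 regs else run t2 regs
  end.

Fixpoint depth (t : dtree) : nat :=
  match t with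
  | Leaf _ => 0
  | Cst _ t' => S (depth t')
  | Bin _ _ _ t' => S (depth t')
  | Cmp _ _ t1 t2 => S (Nat.max (depth t1) (depth t2))
  end.

From Stdlib Require Import Reals Lra Lia Psatz List Arith.
Import ListNotations.
Open Scope R_scope.

(* Write n = 2^k and let E = ||xhat_{[n]\{f}}||_1 be the tail mass, so
   |xhat_f| >= 3E.  Every sample is (1/sqrt n) times a Fourier sum in which the term of
   frequency f is perturbed by at most E in modulus.  The bits of f are read from the
   least significant one upwards: once r = f mod 2^j is known, the sample at
   q = 2^(k-1-j), rotated back by the phase 2 pi r / 2^(j+1), carries the phase
   pi * (bit j of f) modulo 2 pi at frequency f, i.e. it is +-xhat_f up to error E,
   while the sample at q = 0 is xhat_f up to error E.  Since |xhat_f| >= 3E, the real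
   part of (rotated x_q) * conj(x_0) has the sign of +-1, which reveals bit j.

   Both parts of the theorem follow from the decoder:
   uniqueness because f is a function of the samples, and the O(log n) bound because
   the decoder has depth 13 k. *)

(* Cauchy-Schwarz in R^2, via Lagrange's identity. *)
Lemma cauchy_schwarz2 a b c d : (a*c + b*d)^2 <= (a^2 + b^2) * (c^2 + d^2).
Proof.
  replace ((a^2 + b^2) * (c^2 + d^2)) with ((a*c + b*d)^2 + (a*d - b*c)^2) by ring.
  pose proof (pow2_ge_0 (a*d - b*c)); lra.
Qed.

Lemma abs_le_of_sq_le x y : 0 <= y -> x^2 <= y^2 -> -y <= x <= y.
Proof. intros Hy Hsq; split; nra. Qed.

Lemma dot_lower_bound x1 x2 y1 y2 X Y : 0 <= X -> 0 <= Y ->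
  x1^2 + x2^2 <= X^2 -> y1^2 + y2^2 <= Y^2 -> -(X*Y) <= x1*y1 + x2*y2.
Proof.
  intros HX HY Hx Hy.
  enough (-(X*Y) <= x1*y1 + x2*y2 <= X*Y) by lra.
  apply abs_le_of_sq_le; [nra|].
  eapply Rle_trans; [apply cauchy_schwarz2|].
  replace ((X*Y)^2) with (X^2 * Y^2) by ring.
  apply Rmult_le_compat; nra.
Qed.

Lemma cmod_nonneg a b : 0 <= cmod a b.
Proof. apply sqrt_pos. Qed.

Lemma cmod_sq a b : cmod a b ^ 2 = a^2 + b^2.
Proof. unfold cmod. rewrite <- Rsqr_pow2. apply Rsqr_sqrt. nra. Qed.

Lemma cmod_0 : cmod 0 0 = 0.
Proof. unfold cmod. replace (0^2 + 0^2) with 0 by ring. apply sqrt_0. Qed.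

Lemma cmod_tri a b c d : cmod (a + c) (b + d) <= cmod a b + cmod c d.
Proof.
  pose proof (cmod_nonneg a b). pose proof (cmod_nonneg c d).
  pose proof (cmod_sq a b). pose proof (cmod_sq c d).
  assert (Hcs : a*c + b*d <= cmod a b * cmod c d).
  { enough (-(cmod a b * cmod c d) <= a*c + b*d <= cmod a b * cmod c d) by lra.
    apply abs_le_of_sq_le; [nra|].
    rewrite Rpow_mult_distr, H1, H2. apply cauchy_schwarz2. }
  enough (-(cmod a b + cmod c d) <= cmod (a + c) (b + d) <= cmod a b + cmod c d) by lra.
  apply abs_le_of_sq_le; [nra|]. rewrite cmod_sq. nra.
Qed.

Lemma cmod_rot x y t :
  cmod (x * cos t - y * sin t) (x * sin t + y * cos t) = cmod x y.
Proof.
  unfold cmod. f_equal. pose proof (sin2_cos2 t) as H. unfold Rsqr in H.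
  replace ((x * cos t - y * sin t) ^ 2 + (x * sin t + y * cos t) ^ 2)
    with ((x^2 + y^2) * (sin t * sin t + cos t * cos t)) by ring.
  rewrite H; ring.
Qed.

(* If u and v approximate sg*a and a (sg = +-1) within E, where
   a <> 0 and |a| >= 3E, then <u, v> has the sign of sg: the error terms contribute at
   most 2|a|E + E^2, which is less than |a|^2. *)
Lemma aligned_inner_sign a1 a2 u1 u2 v1 v2 E sg :
  (a1 <> 0 \/ a2 <> 0) -> cmod a1 a2 >= 3 * E -> 0 <= E -> sg * sg = 1 ->
  (u1 - sg * a1)^2 + (u2 - sg * a2)^2 <= E^2 ->
  (v1 - a1)^2 + (v2 - a2)^2 <= E^2 ->
  0 < sg * (u1 * v1 + u2 * v2).
Proof.
  intros Ha Hm HE Hsg Hu Hv.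
  pose proof (cmod_sq a1 a2) as Hm2. pose proof (cmod_nonneg a1 a2).
  set (m := cmod a1 a2) in *.
  assert (Hm0 : 0 < m) by (destruct Ha; nra).
  set (d1 := u1 - sg * a1) in *. set (d2 := u2 - sg * a2) in *.
  set (e1 := v1 - a1) in *. set (e2 := v2 - a2) in *.
  assert (Hsd : (sg * d1)^2 + (sg * d2)^2 <= E^2).
  { replace ((sg * d1)^2 + (sg * d2)^2) with ((sg * sg) * (d1^2 + d2^2)) by ring.
    rewrite Hsg; lra. }
  assert (Ha2 : a1^2 + a2^2 <= m^2) by lra.
  pose proof (dot_lower_bound a1 a2 e1 e2 m E ltac:(lra) HE Ha2 Hv).
  pose proof (dot_lower_bound (sg * d1) (sg * d2) a1 a2 E m HE ltac:(lra) Hsd Ha2).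
  pose proof (dot_lower_bound (sg * d1) (sg * d2) e1 e2 E E HE HE Hsd Hv).
  replace (sg * (u1 * v1 + u2 * v2))
    with ((sg * sg) * (a1^2 + a2^2 + (a1*e1 + a2*e2))
          + ((sg*d1)*a1 + (sg*d2)*a2) + ((sg*d1)*e1 + (sg*d2)*e2))
    by (unfold d1, d2, e1, e2; ring).
  rewrite Hsg. nra.
Qed.

Lemma rsum_ext n g h : (forall i, (i < n)%nat -> g i = h i) -> rsum n g = rsum n h.
Proof.
  induction n as [|n IH]; simpl; intros H; [reflexivity|].
  rewrite IH by (intros; apply H; lia). rewrite H by lia. reflexivity.
Qed.

Lemma rsum_nonneg n g : (forall i, 0 <= g i) -> 0 <= rsum n g.
Proof. intros H; induction n; simpl; [lra|]. specialize (H n). lra. Qed.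

Lemma rsum_lin n (A B : nat -> R) c1 c2 :
  rsum n (fun i => c1 * A i + c2 * B i) = c1 * rsum n A + c2 * rsum n B.
Proof. induction n as [|n IH]; simpl; [ring|]. rewrite IH; ring. Qed.

Lemma rsum_split n g f : (f < n)%nat ->
  rsum n g = rsum n (fun i => if Nat.eqb i f then 0 else g i) + g f.
Proof.
  induction n as [|n IH]; intros Hf; [lia|]. simpl.
  destruct (Nat.eq_dec f n) as [->|Hne].
  - rewrite Nat.eqb_refl, (rsum_ext n (fun i => if Nat.eqb i n then 0 else g i) g); [ring|].
    intros i Hi. destruct (Nat.eqb_spec i n); [lia|reflexivity].
  - rewrite IH by lia. destruct (Nat.eqb_spec n f); [lia|]. ring.
Qed.

Lemma rsum_cmod_tri n h1 h2 :
  cmod (rsum n h1) (rsum n h2) <= rsum n (fun i => cmod (h1 i) (h2 i)).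
Proof.
  induction n; simpl.
  - rewrite cmod_0. lra.
  - eapply Rle_trans; [apply cmod_tri|]. lra.
Qed.

Definition fsum_re (n : nat) (xr xi th : nat -> R) : R :=
  rsum n (fun i => xr i * cos (th i) - xi i * sin (th i)).
Definition fsum_im (n : nat) (xr xi th : nat -> R) : R :=
  rsum n (fun i => xr i * sin (th i) + xi i * cos (th i)).

Definition tail_mass (n : nat) (xr xi : nat -> R) (f : nat) : R :=
  rsum n (fun i => if Nat.eqb i f then 0 else cmod (xr i) (xi i)).

Lemma fsum_rotate n xr xi th ps :
  fsum_re n xr xi th * cos ps + fsum_im n xr xi th * sin ps
    = fsum_re n xr xi (fun i => th i - ps) /\
  fsum_im n xr xi th * cos ps - fsum_re n xr xi th * sin ps
    = fsum_im n xr xi (fun i => th i - ps).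
Proof.
  set (A := fun i => xr i * cos (th i) - xi i * sin (th i)).
  set (B := fun i => xr i * sin (th i) + xi i * cos (th i)).
  unfold fsum_re, fsum_im. fold A B. split.
  - rewrite (rsum_ext n (fun i => xr i * cos (th i - ps) - xi i * sin (th i - ps))
                       (fun i => cos ps * A i + sin ps * B i)).
    + rewrite rsum_lin. ring.
    + intros i _. unfold A, B. rewrite cos_minus, sin_minus. ring.
  - rewrite (rsum_ext n (fun i => xr i * sin (th i - ps) + xi i * cos (th i - ps))
                       (fun i => cos ps * B i + (- sin ps) * A i)).
    + rewrite rsum_lin. ring.
    + intros i _. unfold A, B. rewrite cos_minus, sin_minus. ring.
Qed.

Lemma fsum_near_aligned n xr xi th f : (f < n)%nat -> sin (th f) = 0 ->
  (fsum_re n xr xi th - cos (th f) * xr f)^2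
  + (fsum_im n xr xi th - cos (th f) * xi f)^2 <= tail_mass n xr xi f ^ 2.
Proof.
  intros Hf Hs. unfold fsum_re, fsum_im.
  rewrite (rsum_split n _ f Hf), (rsum_split n (fun i => _ * sin _ + _) f Hf), Hs.
  set (T1 := rsum n (fun i => if Nat.eqb i f then 0 else xr i * cos (th i) - xi i * sin (th i))).
  set (T2 := rsum n (fun i => if Nat.eqb i f then 0 else xr i * sin (th i) + xi i * cos (th i))).
  assert (HT : cmod T1 T2 <= tail_mass n xr xi f).
  { eapply Rle_trans; [apply rsum_cmod_tri|]. right. apply rsum_ext. intros i _.
    destruct (Nat.eqb i f); [apply cmod_0|apply cmod_rot]. }
  pose proof (cmod_sq T1 T2). pose proof (cmod_nonneg T1 T2).
  replace (T1 + (xr f * cos (th f) - xi f * 0) - cos (th f) * xr f) with T1 by ring.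
  replace (T2 + (xr f * 0 + xi f * cos (th f)) - cos (th f) * xi f) with T2 by ring.
  nra.
Qed.

Lemma heavy_inner_sign n xr xi f th th0 : heavy n xr xi f ->
  sin (th f) = 0 -> cos (th0 f) = 1 -> sin (th0 f) = 0 ->
  0 < cos (th f) * (fsum_re n xr xi th * fsum_re n xr xi th0
                    + fsum_im n xr xi th * fsum_im n xr xi th0).
Proof.
  intros [Hf [Hnz Hheavy]] Hs Hc0 Hs0.
  pose proof (fsum_near_aligned n xr xi th0 f Hf Hs0) as D0. rewrite Hc0, !Rmult_1_l in D0.
  apply (aligned_inner_sign (xr f) (xi f) _ _ _ _ (tail_mass n xr xi f)); auto.
  - apply rsum_nonneg. intros i. destruct (Nat.eqb i f); [lra|apply cmod_nonneg].
  - pose proof (sin2_cos2 (th f)) as H. unfold Rsqr in H. rewrite Hs in H. lra.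
  - apply fsum_near_aligned; auto.
Qed.

Lemma pow2_pos j : (0 < Nat.pow 2 j)%nat.
Proof. apply Nat.neq_0_lt_0, Nat.pow_nonzero; lia. Qed.

Lemma mod_pow2_S f j :
  (f mod Nat.pow 2 (S j) = f mod Nat.pow 2 j + Nat.pow 2 j * ((f / Nat.pow 2 j) mod 2))%nat.
Proof.
  replace (Nat.pow 2 (S j)) with (Nat.pow 2 j * 2)%nat by (simpl; lia).
  apply Nat.Div0.mod_mul_r.
Qed.

Lemma phase_probe k j f : (j < k)%nat ->
  phase (Nat.pow 2 k) (Nat.pow 2 (k - 1 - j)) f
    - 2 * PI * INR (f mod Nat.pow 2 j) / INR (Nat.pow 2 (S j))
  = INR ((f / Nat.pow 2 j) mod 2) * PI + 2 * INR (f / Nat.pow 2 (S j)) * PI.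
Proof.
  intros Hj. unfold phase.
  assert (HS : Nat.pow 2 (S j) = (Nat.pow 2 j * 2)%nat) by (simpl; lia).
  assert (Hk : Nat.pow 2 k = (Nat.pow 2 (k - 1 - j) * Nat.pow 2 (S j))%nat)
    by (rewrite <- Nat.pow_add_r; f_equal; lia).
  assert (Hf : f = (Nat.pow 2 (S j) * (f / Nat.pow 2 (S j))
                    + (f mod Nat.pow 2 j + Nat.pow 2 j * ((f / Nat.pow 2 j) mod 2)))%nat)
    by (rewrite <- mod_pow2_S; exact (Nat.div_mod_eq f (Nat.pow 2 (S j)))).
  rewrite Hk, Hf at 1. rewrite HS.
  pose proof (lt_0_INR _ (pow2_pos j)). pose proof (lt_0_INR _ (pow2_pos (k - 1 - j))).
  rewrite !mult_INR, !plus_INR, !mult_INR. simpl (INR 2).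
  field. lra.
Qed.

Lemma cos_sin_half_turns (b m : nat) : (b < 2)%nat ->
  sin (INR b * PI + 2 * INR m * PI) = 0 /\
  cos (INR b * PI + 2 * INR m * PI) = if Nat.eqb b 0 then 1 else -1.
Proof.
  intros Hb. rewrite sin_period, cos_period.
  destruct b as [|[|b]]; [| |lia]; simpl; rewrite ?Rmult_0_l, ?Rmult_1_l.
  - rewrite sin_0, cos_0. auto.
  - rewrite sin_PI, cos_PI. auto.
Qed.

(* The bit test: with (a, b) = x_q, (c, d) = x_0, cs = cos ps and sn = sin ps, this is
   Re(x_q e^{-i ps} conj(x_0)). *)
Definition probe_stat (a b c d cs sn : R) : R := (a*c + b*d) * cs + (b*c - a*d) * sn.

Lemma probe_stat_fsum n xr xi q ps :
  probe_stat (samp_re n xr xi q) (samp_im n xr xi q)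
             (samp_re n xr xi 0) (samp_im n xr xi 0) (cos ps) (sin ps)
  = / INR n * (fsum_re n xr xi (fun i => phase n q i - ps) * fsum_re n xr xi (phase n 0)
               + fsum_im n xr xi (fun i => phase n q i - ps) * fsum_im n xr xi (phase n 0)).
Proof.
  destruct (fsum_rotate n xr xi (phase n q) ps) as [<- <-].
  replace (/ INR n) with (/ sqrt (INR n) * / sqrt (INR n))
    by (rewrite <- Rinv_mult, sqrt_sqrt; auto using pos_INR).
  unfold probe_stat, samp_re, samp_im, fsum_re, fsum_im. ring.
Qed.

Lemma probe_sign k xr xi f j : heavy (Nat.pow 2 k) xr xi f -> (j < k)%nat ->
  let n := Nat.pow 2 k in let q := Nat.pow 2 (k - 1 - j) in
  let ps := 2 * PI * INR (f mod Nat.pow 2 j) / INR (Nat.pow 2 (S j)) in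
  let t := probe_stat (samp_re n xr xi q) (samp_im n xr xi q)
                      (samp_re n xr xi 0) (samp_im n xr xi 0) (cos ps) (sin ps) in
  if Nat.eqb ((f / Nat.pow 2 j) mod 2) 0 then 0 < t else t < 0.
Proof.
  intros Hh Hj n q ps t.
  set (th := fun i => phase n q i - ps).
  assert (Hbit : ((f / Nat.pow 2 j) mod 2 < 2)%nat) by (apply Nat.mod_upper_bound; lia).
  destruct (cos_sin_half_turns _ (f / Nat.pow 2 (S j)) Hbit) as [Hs Hc].
  rewrite <- (phase_probe k j f Hj) in Hs, Hc. fold n q ps in Hs, Hc.
  assert (Hphase0 : forall i, phase n 0 i = 0)
    by (intros i; unfold phase; rewrite Nat.mul_0_l; simpl; lra).
  pose proof (heavy_inner_sign n xr xi f th (phase n 0) Hh Hs) as Hsign.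
  rewrite Hphase0, cos_0, sin_0 in Hsign. specialize (Hsign eq_refl eq_refl).
  assert (Hn : 0 < / INR n) by (apply Rinv_0_lt_compat, lt_0_INR, pow2_pos).
  unfold t. rewrite probe_stat_fsum. fold th.
  change (cos (th f)) with (cos (phase n q f - ps)) in Hsign. rewrite Hc in Hsign.
  destruct (Nat.eqb _ 0); nra.
Qed.

Lemma nth_flat_map_pair (a b : nat -> R) (l : list nat) p : (p < length l)%nat ->
  nth (2 * p) (flat_map (fun q => [a q; b q]) l) 0 = a (nth p l 0%nat) /\
  nth (S (2 * p)) (flat_map (fun q => [a q; b q]) l) 0 = b (nth p l 0%nat).
Proof.
  revert p; induction l as [|x l IH]; intros p Hp; simpl in Hp; [lia|].
  destruct p as [|p]; simpl; [auto|].
  replace (p + S (p + 0))%nat with (S (2 * p)) by lia. apply IH. lia.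
Qed.

Lemma length_Qlist k : length (Qlist k) = S k.
Proof. unfold Qlist. simpl. rewrite length_map, length_seq. reflexivity. Qed.

Lemma length_samples k xr xi : length (samples k xr xi) = (2 * (k + 1))%nat.
Proof.
  unfold samples. rewrite (flat_map_constant_length (c := 2%nat)) by reflexivity.
  rewrite length_Qlist. lia.
Qed.

Lemma nth_samples k xr xi p : (p <= k)%nat ->
  nth (2 * p) (samples k xr xi) 0
    = samp_re (Nat.pow 2 k) xr xi (nth p (Qlist k) 0%nat) /\
  nth (S (2 * p)) (samples k xr xi) 0
    = samp_im (Nat.pow 2 k) xr xi (nth p (Qlist k) 0%nat).
Proof. intros Hp. apply nth_flat_map_pair. rewrite length_Qlist. lia. Qed.

Lemma nth_Qlist k i : (i < k)%nat -> nth (S i) (Qlist k) 0%nat = Nat.pow 2 i.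
Proof.
  intros Hi. unfold Qlist. simpl nth.
  rewrite (nth_indep _ 0%nat (Nat.pow 2 0)) by (rewrite length_map, length_seq; lia).
  rewrite map_nth, seq_nth by lia. reflexivity.
Qed.

(* Decision-tree gadget evaluating [probe_stat] on registers 2+2i, 3+2i (the sample at
   q = 2^i), 0, 1 (the sample at q = 0) and the constants cs, sn, using 12 new registers
   starting at L, then branching on (test <= 0). *)
Definition probe_gadget (L i : nat) (cs sn : R) (t1 t2 : dtree) : dtree :=
  Bin OMul (2+2*i) 0 (Bin OMul (3+2*i) 1 (Bin OAdd (L+0) (L+1)
  (Bin OMul (3+2*i) 0 (Bin OMul (2+2*i) 1 (Bin OSub (L+3) (L+4)
  (Cst cs (Cst sn (Bin OMul (L+2) (L+6) (Bin OMul (L+5) (L+7)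
  (Bin OAdd (L+8) (L+9) (Cst 0 (Cmp (L+10) (L+11) t1 t2)))))))))))).

Lemma run_Bin_app o i j t regs l : run (Bin o i j t) (regs ++ l) =
  run t (regs ++ (l ++ [apply_binop o (nth i (regs ++ l) 0) (nth j (regs ++ l) 0)])).
Proof. simpl. rewrite app_assoc. reflexivity. Qed.

Lemma run_Cst_app c t regs l : run (Cst c t) (regs ++ l) = run t (regs ++ (l ++ [c])).
Proof. simpl. rewrite app_assoc. reflexivity. Qed.

Lemma run_probe_gadget i cs sn t1 t2 regs : (3 + 2*i < length regs)%nat ->
  exists vals, length vals = 12%nat /\
  run (probe_gadget (length regs) i cs sn t1 t2) regs =
  if Rle_dec (probe_stat (nth (2+2*i) regs 0) (nth (3+2*i) regs 0)
                         (nth 0 regs 0) (nth 1 regs 0) cs sn) 0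
  then run t1 (regs ++ vals) else run t2 (regs ++ vals).
Proof.
  intros Hi.
  assert (H0 : (0 < length regs)%nat) by lia. assert (H1 : (1 < length regs)%nat) by lia.
  assert (H2 : (2 + 2*i < length regs)%nat) by lia.
  unfold probe_gadget. remember (length regs) as L eqn:HL.
  rewrite <- (app_nil_r regs). subst L.
  do 12 (first [rewrite run_Bin_app | rewrite run_Cst_app]; cbn [app apply_binop];
         rewrite ?app_nth2_plus; cbn [nth];
         rewrite ?(app_nth1 _ _ _ H0), ?(app_nth1 _ _ _ H1), ?(app_nth1 _ _ _ H2),
                 ?(app_nth1 _ _ _ Hi)).
  cbn [run]. rewrite !app_nth2_plus. cbn [nth]. rewrite app_nil_r.
  eexists; split; [|reflexivity]. reflexivity.
Qed.

(* The decoder: at level j with r = f mod 2^j known and L registers used, run the bit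
   test for q = 2^(k-1-j) and recurse with r + 2^j (bit 1) or r (bit 0); m levels remain. *)
Fixpoint decoder (k m j r L : nat) : dtree :=
  match m with
  | O => Leaf r
  | S m' =>
      let ps := 2 * PI * INR r / INR (Nat.pow 2 (S j)) in
      probe_gadget L (k - 1 - j) (cos ps) (sin ps)
        (decoder k m' (S j) (r + Nat.pow 2 j) (L + 12))
        (decoder k m' (S j) r (L + 12))
  end.

(* Each level costs 13 operations. *)
Lemma depth_decoder k m j r L : (depth (decoder k m j r L) <= 13 * m)%nat.
Proof.
  revert j r L; induction m as [|m IH]; intros; simpl; [lia|].
  pose proof (IH (S j) (r + Nat.pow 2 j)%nat (L + 12)%nat).
  pose proof (IH (S j) r (L + 12)%nat). lia.
Qed.

Lemma decoder_correct k xr xi f : heavy (Nat.pow 2 k) xr xi f ->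
  forall m j extra, (j + m = k)%nat ->
  run (decoder k m j (f mod Nat.pow 2 j) (length (samples k xr xi ++ extra)))
      (samples k xr xi ++ extra) = f.
Proof.
  intros Hh. induction m as [|m IH]; intros j extra Hjm.
  - simpl. replace j with k by lia. apply Nat.mod_small. apply Hh.
  - assert (Hj : (j < k)%nat) by lia.
    pose proof (length_samples k xr xi) as Hlen.
    cbn [decoder].
    set (ps := 2 * PI * INR (f mod Nat.pow 2 j) / INR (Nat.pow 2 (S j))).
    destruct (run_probe_gadget (k - 1 - j) (cos ps) (sin ps)
      (decoder k m (S j) (f mod Nat.pow 2 j + Nat.pow 2 j)
         (length (samples k xr xi ++ extra) + 12))
      (decoder k m (S j) (f mod Nat.pow 2 j) (length (samples k xr xi ++ extra) + 12))
      (samples k xr xi ++ extra)) as [vals [Hvals ->]].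
    { rewrite length_app. lia. }
    rewrite !app_nth1 by lia.
    destruct (nth_samples k xr xi (S (k - 1 - j))) as [Ha Hb]; [lia|].
    destruct (nth_samples k xr xi 0) as [Hc Hd]; [lia|]. rewrite Nat.mul_0_r in Hc, Hd.
    replace (2 + 2 * (k - 1 - j))%nat with (2 * S (k - 1 - j))%nat by lia.
    replace (3 + 2 * (k - 1 - j))%nat with (S (2 * S (k - 1 - j)))%nat by lia.
    rewrite Ha, Hb, Hc, Hd, nth_Qlist by lia. cbn [nth Qlist Nat.mul].
    pose proof (probe_sign k xr xi f j Hh Hj) as Hsign. cbv zeta in Hsign. fold ps in Hsign.
    assert (Hlen' : (length (samples k xr xi ++ extra) + 12)%nat
                    = length (samples k xr xi ++ (extra ++ vals)))
      by (rewrite !length_app; lia).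
    rewrite <- app_assoc, Hlen'.
    pose proof (mod_pow2_S f j) as Hmod.
    assert (Hbit : ((f / Nat.pow 2 j) mod 2 < 2)%nat) by (apply Nat.mod_upper_bound; lia).
    destruct ((f / Nat.pow 2 j) mod 2) as [|[|b]]; [| |lia]; cbn [Nat.eqb] in Hsign.
    + destruct (Rle_dec _ 0); [lra|]. rewrite Nat.mul_0_r, Nat.add_0_r in Hmod.
      rewrite <- Hmod. apply IH. lia.
    + destruct (Rle_dec _ 0); [|lra]. rewrite Nat.mul_1_r in Hmod.
      rewrite <- Hmod. apply IH. lia.
Qed.

Lemma decoder_decodes k xr xi f : heavy (Nat.pow 2 k) xr xi f ->
  run (decoder k k 0 0 (2 * (k + 1))) (samples k xr xi) = f.
Proof.
  intros Hh.
  replace (decoder k k 0 0 (2 * (k + 1)))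
    with (decoder k k 0 (f mod Nat.pow 2 0) (length (samples k xr xi ++ [])))
    by (rewrite app_nil_r, length_samples, Nat.mod_1_r; reflexivity).
  rewrite <- (app_nil_r (samples k xr xi)) at 2.
  apply decoder_correct; auto.
Qed.

Theorem lemma6p1 :
  (forall (k : nat) (xr xi yr yi : nat -> R) (f g : nat),
      heavy (Nat.pow 2 k) xr xi f ->
      heavy (Nat.pow 2 k) yr yi g ->
      samples k xr xi = samples k yr yi ->
      f = g) /\
  (exists c : nat, forall k : nat, exists T : dtree,
      (depth T <= c * (k + 1))%nat /\
      forall (xr xi : nat -> R) (f : nat),
        heavy (Nat.pow 2 k) xr xi f -> run T (samples k xr xi) = f).
Proof.
  split.
  - intros k xr xi yr yi f g Hx Hy Hs.
    rewrite <- (decoder_decodes k xr xi f Hx), <- (decoder_decodes k yr yi g Hy), Hs.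
    reflexivity.
  - exists 13%nat. intros k. exists (decoder k k 0 0 (2 * (k + 1))). split.
    + pose proof (depth_decoder k k 0 0 (2 * (k + 1))). lia.
    + apply decoder_decodes.
Qed.
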